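(* Consider the two-user two-hop MAC with $n$ relays as in the context. Then (i) $\bigcup_{\mathbf B\text{ feasible},\,\mathbf B\mathbf h_1\neq 0}\mathcal R^{out}_1(\mathbf B)=\bigcup_{\theta\in[\alpha,\beta]}\mathcal R(\theta)$, i.e. it suffices to take $\theta\in[\alpha,\beta]$; and (ii) if $\arccos(\hat{\mathbf h}_{01}^T\hat{\mathbf h}_{02})\le\pi/4$, then $\bigcup_{\theta\in[\alpha,\beta]}\mathcal R(\theta)$ is a convex set (so it equals its convex hull).
   Context: Two sources $S_1,S_2$ with Gaussian inputs of powers $P_{S_1},P_{S_2}>0$, $n$ relays, one destination. Relay $k$ receives $y_k=h_{S_1,k}x_{S_1}+h_{S_2,k}x_{S_2}+z_k$ and sends $\beta_k y_k$; the destination receives $y_D=\mathbf h_1^T\mathbf B\mathbf h_{01}x_{S_1}+\mathbf h_1^T\mathbf B\mathbf h_{02}x_{S_2}+\mathbf h_1^T\mathbf B\mathbf z_1+z_D$, where $\mathbf h_{0i}=(h_{S_i,k})_k\in\mathbb R^n$, $\mathbf h_1=(h_{k,D})_k\in\mathbb R^n$ have positive entries, $\mathbf B=\mathrm{diag}(\beta_1,\dots,\beta_n)$ with real gains, and noises are i.i.d. $\mathcal N(0,1)$. $\mathbf B$ is feasible if $|\beta_k|\le\beta_k^{Up}:=\sqrt{P_k^{Up}/(1+h_{S_1,k}^2P_{S_1}+h_{S_2,k}^2P_{S_2})}$ for all $k$. Let $\mathcal C(x)=\frac12\log_2(1+x)$ and $\mathbf A=P_{S_1}\mathbf h_{01}\mathbf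 h_{01}^T+P_{S_2}\mathbf h_{02}\mathbf h_{02}^T$. For $\mathbf B$ with $\mathbf B\mathbf h_1\ne0$, $\mathcal R^{out}_1(\mathbf B)$ is the set of $(R_1,R_2)\ge0$ with $R_1\le\mathcal C\big((\mathbf h_1^T\mathbf B\mathbf h_{01})^2P_{S_1}/\mathbf h_1^T\mathbf B^2\mathbf h_1\big)$, $R_2\le\mathcal C\big((\mathbf h_1^T\mathbf B\mathbf h_{02})^2P_{S_2}/\mathbf h_1^T\mathbf B^2\mathbf h_1\big)$, $R_1+R_2\le\mathcal C\big(\mathbf h_1^T\mathbf B\mathbf A\mathbf B\mathbf h_1/\mathbf h_1^T\mathbf B^2\mathbf h_1\big)$. Let $\hat{\mathbf h}_{0i}=\mathbf h_{0i}/\|\mathbf h_{0i}\|$ and $P_i=\|\mathbf h_{0i}\|^2P_{S_i}$. Fix orthonormal $\mathbf u_1,\mathbf u_2\in\mathbb R^n$ and angles $0\le\alpha\le\beta\le\pi/2$ with $\hat{\mathbf h}_{01}=\cos\alpha\,\mathbf u_1+\sin\alpha\,\mathbf u_2$, $\hat{\mathbf h}_{02}=\cos\beta\,\mathbf u_1+\sin\beta\,\mathbf u_2$. For $\theta\in\mathbb R$ let $\phi_1(\theta)=P_1\cos^2(\theta-\alpha)$, $\phi_2(\theta)=P_2\cos^2(\theta-\beta)$, $\phi=\phi_1+\phi_2$, and $\mathcal R(\theta)=\{(R_1,R_2)\ge0:R_1\le\mathcal C(\phi_1(\theta)),R_2\le\mathcal C(\phi_2(\theta)),R_1+R_2\le\mathcal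 C(\phi(\theta))\}$. *)

From HB Require Import structures.
From mathcomp Require Import all_boot all_order all_algebra.
From mathcomp Require Import all_classical all_reals all_analysis.
Set Implicit Arguments. Unset Strict Implicit. Unset Printing Implicit Defensive.
Import Order.TTheory GRing.Theory Num.Theory.
Local Open Scope ring_scope.
Local Open Scope classical_set_scope.

Definition capC {R : realType} (x : R) : R := ln (1 + x) / (2 * ln 2).

Definition region3 {R : realType} (a b c : R) : set (R * R) :=
  [set p | 0 <= p.1 /\ 0 <= p.2 /\ p.1 <= capC a /\ p.2 <= capC b
           /\ p.1 + p.2 <= capC c].

Definition dotv {R : realType} {n : nat} (u v : 'cV[R]_n) : R := (u^T *m v) 0 0.
Definition normv {R : realType} {n : nat} (u : 'cV[R]_n) : R := Num.sqrt (dotv u u).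

Definition Amx {R : realType} {n : nat} (PS1 PS2 : R) (h01 h02 : 'cV[R]_n) : 'M[R]_n :=
  PS1 *: (h01 *m h01^T) + PS2 *: (h02 *m h02^T).

Definition Rout1 {R : realType} {n : nat} (PS1 PS2 : R) (h01 h02 h1 : 'cV[R]_n)
    (b : 'rV[R]_n) : set (R * R) :=
  let B := diag_mx b in
  let den := (h1^T *m B *m B *m h1) 0 0 in
  region3 (((h1^T *m B *m h01) 0 0) ^+ 2 * PS1 / den)
          (((h1^T *m B *m h02) 0 0) ^+ 2 * PS2 / den)
          ((h1^T *m B *m Amx PS1 PS2 h01 h02 *m B *m h1) 0 0 / den).

Definition betaUp {R : realType} {n : nat} (PS1 PS2 : R) (PUp : 'I_n -> R)
    (h01 h02 : 'cV[R]_n) (k : 'I_n) : R :=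
  Num.sqrt (PUp k / (1 + (h01 k 0) ^+ 2 * PS1 + (h02 k 0) ^+ 2 * PS2)).

Definition feasible {R : realType} {n : nat} (PS1 PS2 : R) (PUp : 'I_n -> R)
    (h01 h02 : 'cV[R]_n) (b : 'rV[R]_n) : Prop :=
  forall k : 'I_n, `|b 0 k| <= betaUp PS1 PS2 PUp h01 h02 k.

Definition Rtheta {R : realType} (P1 P2 alpha beta theta : R) : set (R * R) :=
  let phi1 := P1 * cos (theta - alpha) ^+ 2 in
  let phi2 := P2 * cos (theta - beta) ^+ 2 in
  region3 phi1 phi2 (phi1 + phi2).

Definition convex2 {R : realType} (S : set (R * R)) : Prop :=
  forall x y, S x -> S y -> forall t : R, 0 <= t <= 1 ->
    S (t * x.1 + (1 - t) * y.1, t * x.2 + (1 - t) * y.2).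

(* Put w := B h1 and e t := cos t u1 + sin t u2, so that the normalised channels
   are e alpha and e beta.  Each rate constraint of R^out_1(B) is P_i times the
   squared cosine of the angle between w and e alpha, resp. e beta.  The unit
   vector w / |w| projects into the unit disc of the plane (u1, u2); rotating
   from beta towards alpha by the least angle that keeps the beta-constraint
   valid gives a theta in [alpha, beta] with cos (theta - alpha) and
   cos (theta - beta) dominating both cosines, so R^out_1(B) lies in R(theta).
   Conversely w = c e theta is realised by a feasible B for c > 0 small, and
   then R^out_1(B) = R(theta).  For convexity, cos^2 is concave on
   [-pi/4, pi/4], hence phi_1 and phi_2 are concave on [alpha, beta] when
   beta - alpha <= pi/4, while C is concave and increasing. *)

From HB Require Import structures.
From mathcomp Require Import all_boot all_order all_algebra.
From mathcomp Require Import all_classical all_reals all_analysis.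
From mathcomp Require Import ring lra.
Import Order.TTheory GRing.Theory Num.Theory.
Local Open Scope ring_scope.
Local Open Scope classical_set_scope.
Set Implicit Arguments. Unset Strict Implicit.

Section InnerProduct.
Variables (R : realType) (n : nat).
Implicit Types u v w : 'cV[R]_n.

Lemma dotvE u v : dotv u v = \sum_i u i 0 * v i 0.
Proof. by rewrite /dotv !mxE; apply: eq_bigr => i _; rewrite mxE. Qed.

Lemma dotvC u v : dotv u v = dotv v u.
Proof. by rewrite !dotvE; apply: eq_bigr => i _; rewrite mulrC. Qed.

Lemma dotvDr u v w : dotv u (v + w) = dotv u v + dotv u w.
Proof. by rewrite /dotv mulmxDr mxE. Qed.

Lemma dotvZr u v (a : R) : dotv u (a *: v) = a * dotv u v.
Proof. by rewrite /dotv -scalemxAr mxE. Qed.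

Lemma dotvNr u v : dotv u (- v) = - dotv u v.
Proof. by rewrite -scaleN1r dotvZr mulN1r. Qed.

Lemma dotvDl u v w : dotv (v + w) u = dotv v u + dotv w u.
Proof. by rewrite dotvC dotvDr !(dotvC u). Qed.

Lemma dotvZl u v (a : R) : dotv (a *: v) u = a * dotv v u.
Proof. by rewrite dotvC dotvZr dotvC. Qed.

Lemma dotvNl u v : dotv (- v) u = - dotv v u.
Proof. by rewrite dotvC dotvNr dotvC. Qed.

Lemma dotv0l u : dotv 0 u = 0.
Proof. by rewrite /dotv trmx0 mul0mx mxE. Qed.

Lemma dotv_ge0 u : 0 <= dotv u u.
Proof. by rewrite dotvE sumr_ge0 // => i _; rewrite -expr2 sqr_ge0. Qed.

Lemma dotv_gt0 u : u != 0 -> 0 < dotv u u.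
Proof.
move=> u0; rewrite lt_def dotv_ge0 andbT; apply: contra u0.
rewrite dotvE psumr_eq0 => [/allP u0|i _]; last by rewrite -expr2 sqr_ge0.
apply/eqP/matrixP => i j; rewrite (ord1 j) mxE.
by have /implyP/(_ isT) := u0 i (mem_index_enum i); rewrite mulf_eq0 orbb => /eqP.
Qed.

Lemma normv_gt0 u : u != 0 -> 0 < normv u.
Proof. by move=> u0; rewrite sqrtr_gt0 dotv_gt0. Qed.

Lemma normv_scaleV u : normv u *: ((normv u)^-1 *: u) = u.
Proof.
have [->|u0] := eqVneq u 0; first by rewrite !scaler0.
by rewrite scalerA mulfV ?scale1r // gt_eqF // normv_gt0.
Qed.

Lemma dotv_normalized u : u != 0 ->
  dotv ((normv u)^-1 *: u) ((normv u)^-1 *: u) = 1.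
Proof.
move=> u0; have n0 : normv u != 0 by rewrite gt_eqF // normv_gt0.
have n2 : normv u ^+ 2 = dotv u u by rewrite sqr_sqrtr // dotv_ge0.
by rewrite dotvZl dotvZr mulrA -expr2 exprVn n2 mulVf // -n2 expf_neq0.
Qed.

Definition cos2v u v := dotv u v ^+ 2 / dotv u u.

Lemma cos2v_ge0 u v : 0 <= cos2v u v.
Proof. by rewrite divr_ge0 ?sqr_ge0 ?dotv_ge0. Qed.

Lemma cos2v_scale (c : R) u v : c != 0 -> cos2v (c *: u) v = cos2v u v.
Proof.
move=> c0; rewrite /cos2v dotvZl !dotvZr dotvZl mulrA -expr2 exprMn invfM.
by rewrite mulrACA mulfV ?mul1r // expf_neq0.
Qed.

End InnerProduct.

Section Angles.
Variable R : realType.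

Lemma sqr_le_of_norm_le (x y : R) : `|x| <= y -> x ^+ 2 <= y ^+ 2.
Proof.
move=> xy; have y0 : 0 <= y := le_trans (normr_ge0 x) xy.
by rewrite -(real_normK (num_real x)) ler_sqr ?nnegrE.
Qed.

Lemma cos_le_cos (x y : R) : 0 <= x -> x <= y -> y <= pi -> cos y <= cos x.
Proof.
move=> x0 xy ypi.
have xI : x \in `[0, pi]%R by rewrite in_itv /= x0 (le_trans xy ypi).
have yI : y \in `[0, pi]%R by rewrite in_itv /= ypi (le_trans x0 xy).
by rewrite leNgt ltr_cos // -leNgt.
Qed.

Lemma exists_shift (d Y V : R) : 0 <= d <= pi / 2 -> Y ^+ 2 + V ^+ 2 <= 1 ->
  exists2 e, 0 <= e <= d &
    (cos d * Y + sin d * V) ^+ 2 <= cos (d - e) ^+ 2 /\ Y ^+ 2 <= cos e ^+ 2.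
Proof.
move=> /andP[d0 dpi] YV; have pi0 := pi_ge0 R.
have cd0 : 0 <= cos d by rewrite cos_ge0_pihalf // dpi andbT (le_trans _ d0) // oppr_le0 divr_ge0.
have sd0 : 0 <= sin d by rewrite sin_ge0_pi // d0 (le_trans dpi) // ler_pdivrMr //; lra.
have Y1 : -1 <= `|Y| <= 1.
  rewrite (le_trans _ (normr_ge0 Y)) ?lerN10 //= -(ler_sqr (x := `|Y|)) ?nnegrE //.
  by rewrite real_normK ?num_real // expr1n; nra.
(* [e] is the least angle with [Y ^+ 2 <= cos e ^+ 2]: either it exceeds [d],
   or it makes that constraint tight and leaves [sin e >= `|V|] for the other. *)
set e := acos `|Y|.
have ce : cos e = `|Y| by rewrite acosK // in_itv.
have [e0 epi] := (acos_ge0 Y1, acos_lepi Y1).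
have [de|ed] := leP d e.
- exists d; first by rewrite lexx d0.
  rewrite subrr cos0 expr1n; split.
    by have := cos2Dsin2 d; have := sqr_ge0 (sin d * Y - cos d * V); nra.
  by apply: sqr_le_of_norm_le; rewrite -ce cos_le_cos.
- exists e; first by rewrite e0 ltW.
  split; last by rewrite ce real_normK ?num_real.
  have se0 : 0 <= sin e by rewrite sin_ge0_pi // e0.
  have Vse : `|V| <= sin e.
    rewrite -ler_sqr ?nnegrE // real_normK ?num_real // sin2cos2 ce.
    by rewrite real_normK ?num_real; lra.
  apply: sqr_le_of_norm_le; rewrite cosB ce.
  apply: le_trans (ler_normD _ _) _; rewrite !normrM (ger0_norm cd0) (ger0_norm sd0).
  by rewrite lerD2l ler_wpM2l.
Qed.

Lemma exists_angle (a b w1 w2 : R) : a <= b -> b <= a + pi / 2 ->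
  w1 ^+ 2 + w2 ^+ 2 <= 1 ->
  exists2 t, a <= t <= b &
    (cos a * w1 + sin a * w2) ^+ 2 <= cos (t - a) ^+ 2
    /\ (cos b * w1 + sin b * w2) ^+ 2 <= cos (t - b) ^+ 2.
Proof.
move=> ab bpi w_le1.
(* Coordinates of [(w1, w2)] in the frame rotated by [b]. *)
set Y := cos b * w1 + sin b * w2; set V := sin b * w1 - cos b * w2.
have YV : Y ^+ 2 + V ^+ 2 = w1 ^+ 2 + w2 ^+ 2.
  by rewrite /Y /V -[RHS]mul1r -(cos2Dsin2 b); ring.
have XE : cos a * w1 + sin a * w2 = cos (b - a) * Y + sin (b - a) * V.
  by rewrite /Y /V cosB sinB -[LHS]mul1r -(cos2Dsin2 b); ring.
have dI : 0 <= b - a <= pi / 2 by apply/andP; split; lra.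
have YV1 : Y ^+ 2 + V ^+ 2 <= 1 by rewrite YV.
have [e /andP[e0 ed] [H1 H2]] := exists_shift dI YV1.
exists (b - e); first by apply/andP; split; lra.
have -> : b - e - a = b - a - e by ring.
have -> : b - e - b = - e by ring.
by rewrite XE cosN.
Qed.

End Angles.

Definition dirv (R : realType) (n : nat) (u1 u2 : 'cV[R]_n) (t : R) : 'cV[R]_n :=
  cos t *: u1 + sin t *: u2.

Lemma dotv_dirv (R : realType) (n : nat) (w u1 u2 : 'cV[R]_n) (t : R) :
  dotv w (dirv u1 u2 t) = cos t * dotv w u1 + sin t * dotv w u2.
Proof. by rewrite /dirv dotvDr !dotvZr. Qed.

Section Orthonormal.
Variables (R : realType) (n : nat) (u1 u2 : 'cV[R]_n).
Hypotheses (u11 : dotv u1 u1 = 1) (u22 : dotv u2 u2 = 1) (u12 : dotv u1 u2 = 0).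

Lemma dotv_dirv_dirv (t s : R) : dotv (dirv u1 u2 t) (dirv u1 u2 s) = cos (t - s).
Proof.
rewrite dotv_dirv /dirv !dotvDl !dotvZl u11 u22 u12 (dotvC u2 u1) u12 cosB.
ring.
Qed.

Lemma dirv_neq0 (t : R) : dirv u1 u2 t != 0.
Proof.
apply/eqP => t0; have := dotv_dirv_dirv t t.
by rewrite subrr cos0 {1}t0 dotv0l => /eqP; rewrite eq_sym oner_eq0.
Qed.

Lemma cos2v_dirv (t s : R) : cos2v (dirv u1 u2 t) (dirv u1 u2 s) = cos (t - s) ^+ 2.
Proof. by rewrite /cos2v !dotv_dirv_dirv subrr cos0 divr1. Qed.

Lemma bessel2 (w : 'cV[R]_n) : dotv w u1 ^+ 2 + dotv w u2 ^+ 2 <= dotv w w.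
Proof.
have := dotv_ge0 (w - dotv w u1 *: u1 - dotv w u2 *: u2).
rewrite !(dotvDl, dotvDr, dotvZr, dotvZl, dotvNl, dotvNr).
rewrite !(dotvC u1 w) !(dotvC u2 w) (dotvC u2 u1) u11 u22 u12.
by move=> H; nra.
Qed.

Lemma cos2v_le_dirv (w : 'cV[R]_n) (a b : R) : w != 0 -> a <= b -> b <= a + pi / 2 ->
  exists2 t, a <= t <= b &
    cos2v w (dirv u1 u2 a) <= cos (t - a) ^+ 2 /\ cos2v w (dirv u1 u2 b) <= cos (t - b) ^+ 2.
Proof.
move=> w0 ab bpi; set v := (normv w)^-1 *: w.
have nw : (normv w)^-1 != 0 by rewrite invr_eq0 gt_eqF // normv_gt0.
have vv : dotv v v = 1 by rewrite dotv_normalized.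
have cos2vE e : cos2v w e = dotv v e ^+ 2.
  by rewrite -(cos2v_scale _ _ nw) /cos2v -/v vv divr1.
have v_le1 : dotv v u1 ^+ 2 + dotv v u2 ^+ 2 <= 1 by rewrite -vv bessel2.
by rewrite !cos2vE !dotv_dirv; apply: exists_angle.
Qed.

End Orthonormal.

Section Concavity.
Variable R : realType.

Lemma derive_Ncos : 'D_1 (- (@cos R)) = sin.
Proof.
apply/funext => z; rewrite (@derive_val _ _ _ _ _ _ _ (is_deriveN (is_derive_cos z))).
exact: opprK.
Qed.

Lemma cos_concave (x y t : R) : - (pi / 2) <= x <= pi / 2 -> - (pi / 2) <= y <= pi / 2 ->
  0 <= t <= 1 -> t * cos x + (1 - t) * cos y <= cos (t * x + (1 - t) * y).
Proof.
wlog xy : x y t / x <= y => [hwlog xI yI /andP[t0 t1]|/andP[x0 _] /andP[_ y1] /andP[t0 t1]].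
  have [|/ltW yx] := leP x y; first by move=> xy; apply: hwlog => //; rewrite t0.
  have t' : 0 <= 1 - t <= 1 by rewrite subr_ge0 t1 gerBl.
  rewrite [t * cos x + _]addrC [t * x + _]addrC.
  by have := hwlog y x (1 - t) yx yI xI t'; rewrite subKr.
have dcos : forall z, derivable (- (@cos R)) z 1.
  by move=> z; apply: ex_derive; exact: is_deriveN.
have : (- cos) (conv (Itv01 t0 t1) (x : R^o) y) <= conv (Itv01 t0 t1) ((- cos) x : R^o) ((- cos) y).
  apply: second_derivative_convex => //.
  - move=> z /andP[xz zy]; rewrite derive_Ncos (@derive_val _ _ _ _ _ _ _ (is_derive_sin z)).
    by rewrite cos_ge0_pihalf // (le_trans x0 (ltW xz)) (le_trans (ltW zy) y1).
  - by apply: cvg_at_left_filter; apply/differentiable_continuous/derivable1_diffP.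
  - by apply: cvg_at_right_filter; apply/differentiable_continuous/derivable1_diffP.
  - by move=> z _; rewrite derive_Ncos; exact: ex_derive.
by rewrite !convRE /= !fctE mulrN mulrN -opprD lerN2.
Qed.

Lemma cos2_concave (x y t : R) : - (pi / 4) <= x <= pi / 4 -> - (pi / 4) <= y <= pi / 4 ->
  0 <= t <= 1 -> t * cos x ^+ 2 + (1 - t) * cos y ^+ 2 <= cos (t * x + (1 - t) * y) ^+ 2.
Proof.
move=> xI yI t01.
have cos2E (z : R) : cos z ^+ 2 = (cos (z *+ 2) + 1) / 2.
  by rewrite cos_mulr2n subrK -mulr_natr mulfK // pnatr_eq0.
have double (z : R) : - (pi / 4) <= z <= pi / 4 -> - (pi / 2) <= z *+ 2 <= pi / 2.
  have pi4 : pi / 2 = pi / 4 + pi / 4 :> R by field.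
  by move=> /andP[z0 z1]; rewrite [z *+ 2]mulr2n; apply/andP; split; lra.
have := cos_concave (double x xI) (double y yI) t01.
rewrite !cos2E (_ : (t * x + (1 - t) * y) *+ 2 = t * (x *+ 2) + (1 - t) * (y *+ 2)).
  by lra.
by rewrite !mulr2n; ring.
Qed.

End Concavity.

Section Capacity.
Variable R : realType.

Lemma ler_capC (u v : R) : 0 <= u -> u <= v -> capC u <= capC v.
Proof.
move=> u0 uv; rewrite /capC ler_pM2r ?invr_gt0 ?mulr_gt0 ?ln_gt0 ?ltr1n //.
by rewrite ler_ln ?posrE ?lerD2l //; lra.
Qed.

Lemma capC_concave (u v w t : R) : 0 <= u -> 0 <= v -> 0 <= t <= 1 ->
  t * u + (1 - t) * v <= w -> t * capC u + (1 - t) * capC v <= capC w.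
Proof.
move=> u0 v0 /andP[t0 t1] uvw.
have := @concave_ln R (Itv01 t0 t1) (1 + u) (1 + v) ltac:(lra) ltac:(lra).
rewrite !convRE /= => ln_conc.
rewrite /capC !mulrA -mulrDl ler_wpM2r ?invr_ge0 ?mulr_ge0 ?ln_ge0 ?ler1n //.
have m0 : 0 <= t * u + (1 - t) * v by rewrite addr_ge0 ?mulr_ge0 ?subr_ge0.
apply: le_trans ln_conc _.
have -> : t * (1 + u) + (1 - t) * (1 + v) = 1 + (t * u + (1 - t) * v) by ring.
by rewrite ler_ln ?posrE ?lerD2l //; lra.
Qed.

Lemma region3_sub (a b c a' b' c' : R) : 0 <= a -> a <= a' -> 0 <= b -> b <= b' ->
  0 <= c -> c <= c' -> region3 a b c `<=` region3 a' b' c'.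
Proof.
move=> a0 aa b0 bb c0 cc p [p1 [p2 [pa [pb pc]]]]; do 2![split => //].
have := ler_capC a0 aa; have := ler_capC b0 bb; have := ler_capC c0 cc.
by move: pa pb pc; clear; lra.
Qed.

Lemma region3_conv (a1 b1 c1 a2 b2 c2 a b c t : R) (p q : R * R) :
  0 <= a1 -> 0 <= b1 -> 0 <= c1 -> 0 <= a2 -> 0 <= b2 -> 0 <= c2 -> 0 <= t <= 1 ->
  t * a1 + (1 - t) * a2 <= a -> t * b1 + (1 - t) * b2 <= b ->
  t * c1 + (1 - t) * c2 <= c ->
  region3 a1 b1 c1 p -> region3 a2 b2 c2 q ->
  region3 a b c (t * p.1 + (1 - t) * q.1, t * p.2 + (1 - t) * q.2).
Proof.
move=> a10 b10 c10 a20 b20 c20 t01 ha hb hc [p1 [p2 [pa [pb pc]]]] [q1 [q2 [qa [qb qc]]]].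
have := capC_concave a10 a20 t01 ha; have := capC_concave b10 b20 t01 hb.
have := capC_concave c10 c20 t01 hc.
by move: t01 => /andP[t0 t1] /=; rewrite /region3 /=; nra.
Qed.

End Capacity.

Section Beamforming.
Variables (R : realType) (n : nat).

Lemma dotv_Amx (PS1 PS2 : R) (h01 h02 w : 'cV[R]_n) :
  dotv w (Amx PS1 PS2 h01 h02 *m w) = PS1 * dotv w h01 ^+ 2 + PS2 * dotv w h02 ^+ 2.
Proof.
have outer (h : 'cV[R]_n) : dotv w (h *m h^T *m w) = dotv w h ^+ 2.
  by rewrite -mulmxA [h^T *m w]mx11_scalar mul_mx_scalar dotvZr -/(dotv h w) dotvC.
by rewrite /Amx mulmxDl -!scalemxAl dotvDr !dotvZr !outer.
Qed.

Lemma Rout1E (PS1 PS2 : R) (h01 h02 h1 : 'cV[R]_n) (b : 'rV[R]_n) :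
  let w := diag_mx b *m h1 in
  let r1 := normv h01 ^+ 2 * PS1 * cos2v w ((normv h01)^-1 *: h01) in
  let r2 := normv h02 ^+ 2 * PS2 * cos2v w ((normv h02)^-1 *: h02) in
  Rout1 PS1 PS2 h01 h02 h1 b = region3 r1 r2 (r1 + r2).
Proof.
move=> w r1 r2.
have proj v : (h1^T *m diag_mx b *m v) 0 0 = dotv w v by rewrite /dotv /w trmx_mul tr_diag_mx.
have normal v : dotv w v = normv v * dotv w ((normv v)^-1 *: v).
  by rewrite -dotvZr normv_scaleV.
have den : (h1^T *m diag_mx b *m diag_mx b *m h1) 0 0 = dotv w w.
  by rewrite -mulmxA proj.
have sum : (h1^T *m diag_mx b *m Amx PS1 PS2 h01 h02 *m diag_mx b *m h1) 0 0
    = dotv w (Amx PS1 PS2 h01 h02 *m w) by rewrite -2!mulmxA proj.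
rewrite /Rout1 /= (proj h01) (proj h02) den sum dotv_Amx /r1 /r2 /cos2v.
by rewrite [dotv w h01]normal [dotv w h02]normal; congr region3; ring.
Qed.

Lemma exists_beam (bnd : 'I_n -> R) (h1 g : 'cV[R]_n) :
  (forall k, 0 < h1 k 0) -> (forall k, 0 < bnd k) ->
  exists2 c, 0 < c & exists2 b : 'rV[R]_n,
    (forall k, `|b 0 k| <= bnd k) & diag_mx b *m h1 = c *: g.
Proof.
move=> h1_gt0 bnd_gt0.
pose q k := `|g k 0| / (h1 k 0 * bnd k).
have q_ge0 k : 0 <= q k by rewrite divr_ge0 // ltW // mulr_gt0.
pose c := (1 + \sum_k q k)^-1.
have S_ge0 : 0 <= \sum_k q k by rewrite sumr_ge0.
have c_gt0 : 0 < c by rewrite invr_gt0; lra.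
exists c => //; exists (\row_k (c * g k 0 / h1 k 0)); last first.
  by apply/matrixP => i j; rewrite (ord1 j) mul_diag_mx !mxE mulfVK // gt_eqF.
move=> k; have cq : c * q k <= 1.
  have qS : q k <= \sum_i q i by rewrite (bigD1 k) //= lerDl sumr_ge0.
  by rewrite ler_pdivrMl ?mulr1; lra.
have -> : `|(\row_k (c * g k 0 / h1 k 0)) 0 k| = c * q k * bnd k.
  rewrite mxE !normrM (gtr0_norm c_gt0) normfV (gtr0_norm (h1_gt0 k)) /q.
  by field; rewrite !gt_eqF.
by rewrite -[leRHS]mul1r ler_wpM2r // ltW.
Qed.

Lemma betaUp_gt0 (PS1 PS2 : R) (PUp : 'I_n -> R) (h01 h02 : 'cV[R]_n) k :
  0 <= PS1 -> 0 <= PS2 -> 0 < PUp k -> 0 < betaUp PS1 PS2 PUp h01 h02 k.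
Proof.
move=> PS10 PS20 PUp0; rewrite sqrtr_gt0 divr_gt0 //.
have := mulr_ge0 (sqr_ge0 (h01 k 0)) PS10; have := mulr_ge0 (sqr_ge0 (h02 k 0)) PS20.
lra.
Qed.

End Beamforming.

Lemma convex_Rtheta_union (R : realType) (P1 P2 a b : R) :
  0 <= P1 -> 0 <= P2 -> a <= b -> b <= a + pi / 4 ->
  convex2 (\bigcup_(t in `[a, b]) Rtheta P1 P2 a b t).
Proof.
move=> P10 P20 ab b_le p q [x /= xI px] [y /= yI py] t t01.
rewrite in_itv /= in xI yI; have /andP[t0 t1] := t01.
have /andP[ax xb] := xI; have /andP[ay yb] := yI.
have pi4 : 0 <= pi / 4 :> R by rewrite divr_ge0 ?pi_ge0.
have zI : a <= t * x + (1 - t) * y <= b.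
  apply/andP; split; rewrite -subr_ge0.
  - have -> : t * x + (1 - t) * y - a = t * (x - a) + (1 - t) * (y - a) by ring.
    by rewrite addr_ge0 // mulr_ge0 ?subr_ge0.
  - have -> : b - (t * x + (1 - t) * y) = t * (b - x) + (1 - t) * (b - y) by ring.
    by rewrite addr_ge0 // mulr_ge0 ?subr_ge0.
exists (t * x + (1 - t) * y); first by rewrite /= in_itv.
have phi_conc (P g : R) : 0 <= P -> a <= g <= b ->
    t * (P * cos (x - g) ^+ 2) + (1 - t) * (P * cos (y - g) ^+ 2)
    <= P * cos (t * x + (1 - t) * y - g) ^+ 2.
  move=> P0 /andP[ag gb].
  have near (z : R) : a <= z <= b -> - (pi / 4) <= z - g <= pi / 4.
    by move=> /andP[az zb]; apply/andP; split; lra.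
  have := cos2_concave (near x xI) (near y yI) t01.
  have -> : t * (x - g) + (1 - t) * (y - g) = t * x + (1 - t) * y - g by ring.
  by move=> conc; rewrite [t * _]mulrCA [(1 - t) * _]mulrCA -mulrDr ler_wpM2l.
have c1 := phi_conc P1 a P10 ltac:(by rewrite lexx ab).
have c2 := phi_conc P2 b P20 ltac:(by rewrite lexx ab).
have phi_ge0 (P g z : R) : 0 <= P -> 0 <= P * cos (z - g) ^+ 2.
  by move=> P0; rewrite mulr_ge0 ?sqr_ge0.
apply: (region3_conv _ _ _ _ _ _ t01 c1 c2 _ px py); rewrite ?addr_ge0 ?phi_ge0 //.
by rewrite !mulrDr; lra.
Qed.

Section TwoHopMAC.
Variables (R : realType) (n : nat) (PS1 PS2 : R) (PUp : 'I_n -> R).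
Variables (h01 h02 h1 u1 u2 : 'cV[R]_n) (a b : R).
Hypotheses (PS1_ge0 : 0 <= PS1) (PS2_ge0 : 0 <= PS2).
Hypotheses (u11 : dotv u1 u1 = 1) (u22 : dotv u2 u2 = 1) (u12 : dotv u1 u2 = 0).
Hypotheses (h01_dir : (normv h01)^-1 *: h01 = dirv u1 u2 a)
           (h02_dir : (normv h02)^-1 *: h02 = dirv u1 u2 b).

Local Notation P1 := (normv h01 ^+ 2 * PS1).
Local Notation P2 := (normv h02 ^+ 2 * PS2).

Lemma Rout1_sub_Rtheta (bm : 'rV[R]_n) : a <= b -> b <= a + pi / 2 ->
  diag_mx bm *m h1 != 0 ->
  Rout1 PS1 PS2 h01 h02 h1 bm `<=` \bigcup_(t in `[a, b]) Rtheta P1 P2 a b t.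
Proof.
move=> ab b_le w0 p; rewrite Rout1E h01_dir h02_dir => pR.
have [t tI [le1 le2]] := cos2v_le_dirv u11 u22 u12 w0 ab b_le.
exists t; first by rewrite /= in_itv.
have P10 : 0 <= P1 by rewrite mulr_ge0 ?sqr_ge0.
have P20 : 0 <= P2 by rewrite mulr_ge0 ?sqr_ge0.
have q1 := mulr_ge0 P10 (cos2v_ge0 (diag_mx bm *m h1) (dirv u1 u2 a)).
have q2 := mulr_ge0 P20 (cos2v_ge0 (diag_mx bm *m h1) (dirv u1 u2 b)).
have r1 := ler_wpM2l P10 le1; have r2 := ler_wpM2l P20 le2.
by apply: (region3_sub q1 r1 q2 r2 _ _ pR); [exact: addr_ge0 | exact: lerD].
Qed.

Lemma Rtheta_sub_Rout1 (t : R) : (forall k, 0 < PUp k) -> (forall k, 0 < h1 k 0) ->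
  Rtheta P1 P2 a b t `<=`
  \bigcup_(bm in [set bm | feasible PS1 PS2 PUp h01 h02 bm /\ diag_mx bm *m h1 != 0])
    Rout1 PS1 PS2 h01 h02 h1 bm.
Proof.
move=> PUp_gt0 h1_gt0 p pt.
have bnd_gt0 k := betaUp_gt0 h01 h02 PS1_ge0 PS2_ge0 (PUp_gt0 k).
have [c c0 [bm bm_feas bmE]] := exists_beam (dirv u1 u2 t) h1_gt0 bnd_gt0.
have c_neq0 : c != 0 by rewrite gt_eqF.
exists bm.
  by split => //; rewrite bmE scaler_eq0 negb_or c_neq0 dirv_neq0.
by rewrite Rout1E bmE !cos2v_scale // h01_dir h02_dir !cos2v_dirv.
Qed.

Lemma Rout1_union_eq : a <= b -> b <= a + pi / 2 ->
  (forall k, 0 < PUp k) -> (forall k, 0 < h1 k 0) ->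
  \bigcup_(bm in [set bm | feasible PS1 PS2 PUp h01 h02 bm /\ diag_mx bm *m h1 != 0])
    Rout1 PS1 PS2 h01 h02 h1 bm
  = \bigcup_(t in `[a, b]) Rtheta P1 P2 a b t.
Proof.
move=> ab b_le PUp_gt0 h1_gt0; apply/seteqP; split => p.
- by move=> [bm [_ w0] pR]; exact: Rout1_sub_Rtheta w0 p pR.
- by move=> [t _ pt]; exact: Rtheta_sub_Rout1 pt.
Qed.

End TwoHopMAC.

Theorem theorem5 (R : realType) (n : nat) (PS1 PS2 : R) (PUp : 'I_n -> R)
  (h01 h02 h1 u1 u2 : 'cV[R]_n) (alpha beta : R) :
  0 < PS1 -> 0 < PS2 ->
  (forall k, 0 < PUp k) ->
  (forall k, 0 < h01 k 0) -> (forall k, 0 < h02 k 0) -> (forall k, 0 < h1 k 0) ->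
  dotv u1 u1 = 1 -> dotv u2 u2 = 1 -> dotv u1 u2 = 0 ->
  0 <= alpha -> alpha <= beta -> beta <= pi / 2 ->
  (normv h01)^-1 *: h01 = cos alpha *: u1 + sin alpha *: u2 ->
  (normv h02)^-1 *: h02 = cos beta *: u1 + sin beta *: u2 ->
  let P1 := normv h01 ^+ 2 * PS1 in
  let P2 := normv h02 ^+ 2 * PS2 in
  (\bigcup_(b in [set b : 'rV[R]_n | feasible PS1 PS2 PUp h01 h02 b
                                   /\ diag_mx b *m h1 != 0])
      Rout1 PS1 PS2 h01 h02 h1 b
   = \bigcup_(theta in `[alpha, beta]) Rtheta P1 P2 alpha beta theta)
  /\
  (acos (dotv ((normv h01)^-1 *: h01) ((normv h02)^-1 *: h02)) <= pi / 4 ->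
   convex2 (\bigcup_(theta in `[alpha, beta]) Rtheta P1 P2 alpha beta theta)).
Proof.
move=> PS1_gt0 PS2_gt0 PUp_gt0 _ _ h1_gt0 u11 u22 u12 alpha_ge0 ab b_le e1 e2 P1 P2.
have pi0 := pi_ge0 R.
have b_le_pi2 : beta <= alpha + pi / 2 by lra.
split; first exact: Rout1_union_eq (ltW PS1_gt0) (ltW PS2_gt0) u11 u22 u12 e1 e2 ab b_le_pi2
  PUp_gt0 h1_gt0.
have -> : dotv ((normv h01)^-1 *: h01) ((normv h02)^-1 *: h02) = cos (beta - alpha).
  by rewrite e1 e2 (dotv_dirv_dirv u11 u22 u12) -opprB cosN.
rewrite cosK ?in_itv /= ?subr_ge0 ?ab; last by lra.
have P10 : 0 <= P1 by rewrite /P1 mulr_ge0 ?sqr_ge0 ?ltW.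
have P20 : 0 <= P2 by rewrite /P2 mulr_ge0 ?sqr_ge0 ?ltW.
by move=> angle; apply: convex_Rtheta_union => //; lra.
Qed.
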